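(* Let $N\ge2$, $0=t_0<t_1<\dots<t_N=1$, $\delta_i:=t_i-t_{i-1}$, and assume $\alpha\delta\le\delta_i\le\delta$ for each $i\in\{1,\dots,N\}$, where $\alpha,\delta>0$. Let $\mathbf T$ be the $(N-1)\times(N-1)$ symmetric tridiagonal matrix with diagonal entries $\mathbf T_{i,i}=2(\delta_i+\delta_{i+1})$ and off-diagonal entries $\mathbf T_{i,i+1}=\mathbf T_{i+1,i}=\delta_{i+1}$. Then $\mathbf T$ is invertible and for all $i,j\in\{1,\dots,N-1\}$, $$|(\mathbf T^{-1})_{i,j}|\le\frac{1}{4\alpha^2(1+\alpha)^{|i-j|-1}}\,\frac1\delta.$$ *)

From mathcomp Require Import all_boot all_order all_algebra.
Set Implicit Arguments. Unset Strict Implicit. Unset Printing Implicit Defensive.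
Import Order.TTheory GRing.Theory Num.Theory.
Local Open Scope ring_scope.

Definition delta (R : ringType) (t : nat -> R) (k : nat) : R := t k - t k.-1.

(* Row/column index i : 'I_(N-1)
   (0-based) corresponds to the paper's index i+1, so
   T_{i,i} = 2 (delta_{i+1} + delta_{i+2}),
   T_{i,i+1} = T_{i+1,i} = delta_{i+2}  (paper: T_{i,i+1} = delta_{i+1}). *)
Definition Tmat (R : ringType) (N : nat) (t : nat -> R) : 'M[R]_(N.-1) :=
  \matrix_(i < N.-1, j < N.-1)
    if i == j :> nat then 2 * (delta t i.+1 + delta t i.+2)
    else if j == i.+1 :> nat then delta t i.+2
    else if i == j.+1 :> nat then delta t j.+2
    else 0.

(* Each diagonal entry 2(delta_i + delta_(i+1)) of T is at least twice the sum
   of the off-diagonal entries of its row and exceeds that sum by at least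
   2 alpha delta.  Taking a row where a solution of T x = c attains its maximum
   modulus bounds every entry of x by max |c| / (2 alpha delta); this makes T
   invertible and bounds each column of T^-1 by 1 / (2 alpha delta).  Away from
   the row j, the j-th column solves a homogeneous equation, so each entry is at
   most half the largest of its two neighbours: entries decay like 2^-|i-j|,
   which beats the claimed (1 + alpha)^-(|i-j|-1) / (2 alpha) since alpha <= 1. *)

From mathcomp Require Import all_boot all_order all_algebra.
From mathcomp Require Import zify ring lra.
Set Implicit Arguments. Unset Strict Implicit. Unset Printing Implicit Defensive.
Import Order.TTheory GRing.Theory Num.Theory.
Local Open Scope ring_scope.

Section DiagonallyDominant.
Variables (R : realFieldType) (n : nat) (A : 'M[R]_n).

Definition offdiag_rowsum (i : 'I_n) : R := \sum_(j | j != i) `|A i j|.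

Lemma diag_dominant_row (x : 'cV[R]_n) (i : 'I_n) (K : R) :
  0 <= K -> (forall j, j != i -> A i j != 0 -> `|x j 0| <= K) ->
  `|A i i| * `|x i 0| <= `|(A *m x) i 0| + offdiag_rowsum i * K.
Proof.
move=> K0 xK; rewrite -normrM.
have -> : A i i * x i 0 = (A *m x) i 0 - \sum_(j | j != i) A i j * x j 0.
  by rewrite mxE (bigD1 i) //= addrK.
apply: le_trans (ler_normB _ _) _; rewrite lerD2l.
apply: le_trans (ler_norm_sum _ _ _) _.
rewrite /offdiag_rowsum mulr_suml; apply: ler_sum => j ji; rewrite normrM.
have [->|Aij] := eqVneq (A i j) 0; first by rewrite normr0 !mul0r.
by rewrite ler_wpM2l // xK.
Qed.

Lemma diag_dominant_cV_bound (lb C : R) (x : 'cV[R]_n) :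
  0 < lb -> (forall i, lb <= `|A i i| - offdiag_rowsum i) ->
  (forall i, `|(A *m x) i 0| <= C) ->
  forall i, `|x i 0| <= C / lb.
Proof.
move=> lb0 dom xC i.
have [i0 _ max_i0] := @arg_maxP _ _ _ i predT (fun k => `|x k 0|) isT.
have row_i0 := @diag_dominant_row x i0 _ (normr_ge0 _) (fun j _ _ => max_i0 j isT).
rewrite ler_pdivlMr //; apply: le_trans (ler_wpM2r (ltW lb0) (max_i0 i isT)) _.
apply: le_trans (ler_wpM2l (normr_ge0 _) (dom i0)) _.
have := xC i0; rewrite mulrBr; lra.
Qed.

Lemma diag_dominant_unitmx (lb : R) :
  0 < lb -> (forall i, lb <= `|A i i| - offdiag_rowsum i) -> A \in unitmx.
Proof.
move=> lb0 dom; rewrite -unitmx_tr -row_free_unit -kermx_eq0.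
apply/eqP/row_matrixP => k; rewrite row0.
set u := row k (kermx A^T).
have Au : A *m u^T = 0.
  by rewrite -[A]trmxK -trmx_mul /u -row_mul mulmx_ker row0 trmx0.
apply/rowP => j; rewrite [RHS]mxE; apply/eqP; rewrite -normr_le0.
have := @diag_dominant_cV_bound lb 0 u^T lb0 dom _ j.
by rewrite mxE mul0r; apply=> i; rewrite Au mxE normr0.
Qed.

Lemma tridiag_dominant_decay (x : 'cV[R]_n) (j : 'I_n) (B : R) :
  (forall i k : 'I_n, (1 < `|(i : int) - (k : int)|)%N -> A i k = 0) ->
  (forall i, 0 < `|A i i|) -> (forall i, 2 * offdiag_rowsum i <= `|A i i|) ->
  (forall i, i != j -> (A *m x) i 0 = 0) ->
  (forall i, `|x i 0| <= B) ->
  forall i, `|x i 0| <= B / 2 ^+ `|(i : int) - (j : int)|%N.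
Proof.
move=> tri diag_gt0 dom xj xB.
suff decay m (i : 'I_n) : (m <= `|(i : int) - (j : int)|)%N -> `|x i 0| <= B / 2 ^+ m.
  by move=> i; apply: decay.
elim: m i => [|m IH] i dist_ij; first by rewrite expr0 divr1.
have ij : i != j by apply: contraTneq dist_ij => ->; rewrite subrr.
have K0 : 0 <= B / 2 ^+ m.
  by rewrite divr_ge0 ?exprn_ge0 // (le_trans _ (xB i)).
have IH_nbr k : k != i -> A i k != 0 -> `|x k 0| <= B / 2 ^+ m.
  by move=> _ /(contra_neq (tri i k)) near_ik; apply: IH; lia.
have := diag_dominant_row K0 IH_nbr; rewrite xj // normr0 add0r => row_i.
rewrite exprSr invfM mulrA ler_pdivlMr //.
have := diag_gt0 i; have := dom i; nra.
Qed.

End DiagonallyDominant.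

Section Tmat.
Variables (R : realFieldType) (N : nat) (t : nat -> R).

Lemma Tmat_diag (i : 'I_N.-1) : Tmat N t i i = 2 * (delta t i.+1 + delta t i.+2).
Proof. by rewrite mxE eqxx. Qed.

Lemma Tmat_tridiag (i k : 'I_N.-1) :
  (1 < `|(i : int) - (k : int)|)%N -> Tmat N t i k = 0.
Proof. by move=> dist_ik; rewrite mxE !ifN_eq //; lia. Qed.

Lemma Tmat_offdiag_rowsum (i : 'I_N.-1) :
  0 <= delta t i.+1 -> 0 <= delta t i.+2 ->
  offdiag_rowsum (Tmat N t) i <= delta t i.+1 + delta t i.+2.
Proof.
move=> d1 d2.
pose pt m c (k : 'I_N.-1) : R := if (k : nat) == m then c else 0.
have pt_ge0 m c k : 0 <= c -> 0 <= pt m c k by rewrite /pt; case: ifP.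
have sum_pt m c : 0 <= c -> \sum_k pt m c k <= c.
  by move=> c0; rewrite -big_mkcond big_ord1_eq; case: ifP.
apply: (@le_trans _ _
  (\sum_(k | k != i) (pt i.-1 (delta t i.+1) k + pt i.+1 (delta t i.+2) k))).
  apply: ler_sum => k ki; rewrite mxE.
  have /negbTE-> : (i : nat) != k by rewrite eq_sym.
  case: eqP => [ki1|_].
    by rewrite /pt ki1 eqxx ger0_norm // lerDr; case: ifP.
  case: eqP => [ik|_]; last by rewrite normr0 addr_ge0 ?pt_ge0.
  by rewrite /pt ik /= eqxx ger0_norm -?ik // lerDl; case: ifP.
apply: le_trans (_ : _ <= \sum_k (pt i.-1 (delta t i.+1) k + pt i.+1 (delta t i.+2) k)) _.
  by rewrite [X in _ <= X](bigD1 i) //= lerDr addr_ge0 ?pt_ge0.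
by rewrite big_split /= lerD ?sum_pt.
Qed.

Lemma Tmat_diag_dominant (c : R) (i : 'I_N.-1) :
  0 < c -> c <= delta t i.+1 -> c <= delta t i.+2 ->
  [/\ 0 < `|Tmat N t i i|,
       2 * c <= `|Tmat N t i i| - offdiag_rowsum (Tmat N t) i
     & 2 * offdiag_rowsum (Tmat N t) i <= `|Tmat N t i i|].
Proof.
move=> c0 c_le_d1 c_le_d2.
have := Tmat_offdiag_rowsum (le_trans (ltW c0) c_le_d1) (le_trans (ltW c0) c_le_d2).
rewrite Tmat_diag ger0_norm; [split|]; lra.
Qed.

End Tmat.

Lemma two_mul_geom_le (R : realFieldType) (alpha : R) (m : nat) :
  0 < alpha -> alpha <= 1 -> 2 * alpha * (1 + alpha) ^ (m%:Z - 1) <= 2 ^+ m.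
Proof.
move=> a0 a1; case: m => [|m].
  by rewrite sub0r exprN1 expr0 ler_pdivrMr; lra.
have -> : (m.+1 : int) - 1 = m by rewrite -addn1 PoszD addrK.
rewrite -exprnP exprS -mulrA ler_pM2l // -[2 ^+ m]mul1r.
by rewrite ler_pM ?exprn_ge0 ?lerXn2r ?nnegrE //; lra.
Qed.

Lemma pow2_decay_le_geom_decay (R : realFieldType) (alpha dlt : R) (m : nat) :
  0 < alpha -> alpha <= 1 -> 0 < dlt ->
  1 / (2 * (alpha * dlt)) / 2 ^+ m
    <= (4 * alpha ^+ 2 * (1 + alpha) ^ (m%:Z - 1))^-1 / dlt.
Proof.
move=> a0 a1 d0; have geom := two_mul_geom_le m a0 a1.
rewrite mul1r -!invfM lef_pV2 ?posrE ?mulr_gt0 ?exprn_gt0 ?exprz_gt0 ?addr_gt0 //.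
have -> : 4 * alpha ^+ 2 * (1 + alpha) ^ (m%:Z - 1) * dlt
          = 2 * (alpha * dlt) * (2 * alpha * (1 + alpha) ^ (m%:Z - 1)) by ring.
by rewrite ler_pM2l ?mulr_gt0.
Qed.

Theorem lemma3 (R : realFieldType) (N : nat) (t : nat -> R) (alpha dlt : R) :
  (2 <= N)%N ->
  t 0%N = 0 -> t N = 1 ->
  (forall k : nat, (k < N)%N -> t k < t k.+1) ->
  0 < alpha -> 0 < dlt ->
  (forall k : nat, (1 <= k <= N)%N -> alpha * dlt <= delta t k <= dlt) ->
  Tmat N t \in unitmx /\
  (forall i j : 'I_(N.-1),
     `|invmx (Tmat N t) i j|
       <= (4 * alpha ^+ 2 * (1 + alpha) ^ ((`|(i : int) - (j : int)|%N)%:Z - 1))^-1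
          * dlt^-1).
Proof.
move=> N_ge2 _ _ _ a0 d0 mesh.
have mesh_lb k : (0 < k <= N)%N -> alpha * dlt <= delta t k by move=> /mesh/andP[].
have a1 : alpha <= 1.
  have /andP[/le_trans le_d /le_d] := mesh 1%N ltac:(lia).
  by move=> ad_le_d; rewrite -(ler_pM2r d0) mul1r.
have ad0 : 0 < alpha * dlt by rewrite mulr_gt0.
have /all_and3[T_diag_gt0 T_dom T_dom2] (i : 'I_N.-1) :=
  Tmat_diag_dominant ad0 (mesh_lb i.+1 ltac:(have := ltn_ord i; lia))
                         (mesh_lb i.+2 ltac:(have := ltn_ord i; lia)).
have lb0 : 0 < 2 * (alpha * dlt) by rewrite mulr_gt0.
have T_unit := diag_dominant_unitmx lb0 T_dom.
split=> // i j; set X := invmx (Tmat N t).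
have TXj k : (Tmat N t *m col j X) k 0 = (k == j)%:R.
  by rewrite colE mulmxA mulmxV ?mul1mx // mxE eqxx andbT.
have TXj_le1 k : `|(Tmat N t *m col j X) k 0| <= 1.
  by rewrite TXj normr_nat lern1 leq_b1.
have TXj_off k : k != j -> (Tmat N t *m col j X) k 0 = 0.
  by move=> kj; rewrite TXj (negbTE kj).
have Xj_bound := diag_dominant_cV_bound lb0 T_dom TXj_le1.
have := tridiag_dominant_decay (@Tmat_tridiag _ _ t) T_diag_gt0 T_dom2 TXj_off Xj_bound i.
rewrite mxE => /le_trans; apply.
exact: pow2_decay_le_geom_decay.
Qed.
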